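(* Let $N\ge2$ be an integer. Consider, for $\lambda\in\mathbb{R}$, the equation $$-w''+(N-2)w'+(N-1)w=\frac{N-1}{2}e^{-t}w^2+\lambda e^{(N-3)t}\int_0^{e^{-t}}g(s)\,ds \qquad (\ast)$$ and the three problems: (D) $w\in C^2([0,\infty))$ solves $(\ast)$ for $t\ge0$ with $w(0)=0$, $\lim_{t\to\infty}w(t)=0$, where $g\in L^1([0,1])$ and $\lim_{t\to\infty}e^{(N-3)t}\int_0^{e^{-t}}g(s)\,ds=0$; (Nav) $w\in C^2([0,\infty))$ solves $(\ast)$ for $t\ge0$ with $w'(0)-(N-1)w(0)=0$, $\lim_{t\to\infty}w(t)=0$, with $g$ as in (D); (E) $w\in C^2(\mathbb{R})$ solves $(\ast)$ for $t\in\mathbb{R}$ with $\lim_{t\to\pm\infty}w(t)=0$, where $g\in L^1([0,\infty))$ and $\lim_{t\to\pm\infty}e^{(N-3)t}\int_0^{e^{-t}}g(s)\,ds=0$. Assume in each case that $g\ge0$ a.e. and $\operatorname{ess\,sup}g>0$. Then, for each of the problems (D), (Nav), (E), there exists $\lambda_0>0$ such that for every $\lambda>\lambda_0$ the problem has no solution.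
   Context: These are the radial Dirichlet, Navier and entire problems for $\Delta^2u=S_2[u]+\lambda f$ ($S_2$ the sum of $2\times2$ principal minors of the Hessian), obtained via $v=u'$, $w(t)=-v(e^{-t})$. *)

From HB Require Import structures.
From mathcomp Require Import all_boot all_order all_algebra.
From mathcomp Require Import all_classical all_reals all_analysis.
From mathcomp Require Import ess_sup_inf.
Set Implicit Arguments. Unset Strict Implicit. Unset Printing Implicit Defensive.
Import Order.TTheory GRing.Theory Num.Theory.
Import numFieldNormedType.Exports.
Local Open Scope classical_set_scope.
Local Open Scope ring_scope.

Section Defs.
Context {R : realType}.

Definition leb01 := mrestr (@lebesgue_measure R) (measurable_itv `[(0:R), 1]).
Definition lebPos :=
  mrestr (@lebesgue_measure R) (measurable_itv `[(0:R), +oo[).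

Definition Gint (g : R -> R) (x : R) : R :=
  \int[@lebesgue_measure R]_(s in `[0, x]) g s.

Definition forcing (N : nat) (g : R -> R) (t : R) : R :=
  expR ((N%:R - 3) * t) * Gint g (expR (- t)).

(* equation (star) at time t, with w1 = w', w2 = w'' *)
Definition eqn (N : nat) (lam : R) (g : R -> R) (w w1 w2 : R -> R) (t : R) :=
  - w2 t + (N%:R - 2) * w1 t + (N%:R - 1) * w t
  = (N%:R - 1) / 2 * expR (- t) * (w t) ^+ 2 + lam * forcing N g t.

(* w in C^2([0,oo)) (one-sided derivatives at 0), with w' = w1, w'' = w2 *)
Definition C2_halfline (w w1 w2 : R -> R) :=
  (forall t : R, 0 < t -> is_derive t (1:R) w (w1 t) /\ is_derive t (1:R) w1 (w2 t)) /\
  {within `[0, +oo[, continuous w} /\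
  {within `[0, +oo[, continuous w1} /\
  {within `[0, +oo[, continuous w2}.

Definition C2_line (w w1 w2 : R -> R) :=
  (forall t : R, is_derive t (1:R) w (w1 t) /\ is_derive t (1:R) w1 (w2 t)) /\
  continuous w2.

Definition solD (N : nat) (lam : R) (g : R -> R) (w : R -> R) :=
  exists w1 w2 : R -> R, C2_halfline w w1 w2 /\
    (forall t, 0 <= t -> eqn N lam g w w1 w2 t) /\
    w 0 = 0 /\ w t @[t --> +oo] --> 0.

Definition solNav (N : nat) (lam : R) (g : R -> R) (w : R -> R) :=
  exists w1 w2 : R -> R, C2_halfline w w1 w2 /\
    (forall t, 0 <= t -> eqn N lam g w w1 w2 t) /\
    w1 0 - (N%:R - 1) * w 0 = 0 /\ w t @[t --> +oo] --> 0.

Definition solE (N : nat) (lam : R) (g : R -> R) (w : R -> R) :=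
  exists w1 w2 : R -> R, C2_line w w1 w2 /\
    (forall t, eqn N lam g w w1 w2 t) /\
    w t @[t --> +oo] --> 0 /\ w t @[t --> -oo] --> 0.

Definition hyp_g01 (N : nat) (g : R -> R) :=
  (@lebesgue_measure R).-integrable `[0, 1] (EFin \o g) /\
  forcing N g t @[t --> +oo] --> 0 /\
  (\forall x \ae leb01, 0 <= g x) /\
  (0 < ess_sup leb01 (EFin \o g))%E.

Definition hyp_gPos (N : nat) (g : R -> R) :=
  (@lebesgue_measure R).-integrable `[0, +oo[ (EFin \o g) /\
  forcing N g t @[t --> +oo] --> 0 /\
  forcing N g t @[t --> -oo] --> 0 /\
  (\forall x \ae lebPos, 0 <= g x) /\
  (0 < ess_sup lebPos (EFin \o g))%E.

End Defs.

(* With s = (t - a)(b - t), phi = s^4 and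
   E = phi' w - phi w' + (N - 2) phi w, the equation gives
   E' = lam F phi + (N - 1)/2 e^{-t} (s^2 w)^2 + B (s^2 w) with B bounded, so
   completing the square yields E' >= lam f0 phi - M with M independent of w
   and lam.  As phi and phi' vanish at a and b, integrating over [a, b] gives
   lam f0 \int_a^b phi <= M (b - a), which bounds lam. *)

From Pilot Require Import Defs.
From HB Require Import structures.
From mathcomp Require Import all_boot all_order all_algebra.
From mathcomp Require Import all_classical all_reals all_analysis.
From mathcomp Require Import ess_sup_inf.
From mathcomp Require Import ring lra.
Import Order.TTheory GRing.Theory Num.Theory.
Import numFieldNormedType.Exports.
Local Open Scope classical_set_scope.
Local Open Scope ring_scope.

Section Calculus.
Context {R : realType}.

Lemma derive_lb_increment {f df : R -> R} {x y k : R} : x <= y ->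
  (forall t, x <= t <= y -> is_derive t 1 f (df t)) ->
  (forall t, x < t < y -> k <= df t) -> k * (y - x) <= f y - f x.
Proof.
rewrite le_eqVlt => /predU1P[<- _ _|xy f_df df_ge]; first by rewrite !subrr mulr0.
have f_cont : {within `[x, y], continuous f}.
  apply: derivable_within_continuous => t; rewrite in_itv /= => /f_df.
  by case.
have f_df' t : t \in `]x, y[ -> is_derive t 1 f (df t).
  by rewrite in_itv /= => /andP[? ?]; apply: f_df; rewrite !ltW.
have [c] := MVT xy f_df' f_cont.
rewrite in_itv /= => c_xy ->.
by apply: ler_wpM2r; [rewrite subr_ge0 ltW|apply: df_ge].
Qed.

Lemma derive_lb_increment_sub {f df : R -> R} {a a' b' b k : R} :
  a <= a' -> a' <= b' -> b' <= b ->
  (forall t, a <= t <= b -> is_derive t 1 f (df t)) ->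
  (forall t, a < t < b -> 0 <= df t) ->
  (forall t, a' < t < b' -> k <= df t) -> k * (b' - a') <= f b - f a.
Proof.
move=> aa' a'b' b'b f_df df_ge0 df_gek.
have sub_ab u v : a <= u -> v <= b -> forall t, u <= t <= v -> is_derive t 1 f (df t).
  by move=> au vb t /andP[ut tv]; apply: f_df; rewrite (le_trans au ut) (le_trans tv vb).
have inc_l := derive_lb_increment (k := 0) aa' (sub_ab _ _ (lexx a) (le_trans a'b' b'b)).
have inc_m := derive_lb_increment a'b' (sub_ab _ _ aa' b'b) df_gek.
have inc_r := derive_lb_increment (k := 0) b'b (sub_ab _ _ (le_trans aa' a'b') (lexx b)).
have /inc_l : forall t, a < t < a' -> 0 <= df t.
  by move=> t /andP[a_t ta']; apply: df_ge0; rewrite a_t (lt_le_trans ta') ?(le_trans a'b').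
have /inc_r : forall t, b' < t < b -> 0 <= df t.
  by move=> t /andP[b't tb]; apply: df_ge0; rewrite tb (le_lt_trans _ b't) ?(le_trans aa').
rewrite !mul0r; lra.
Qed.
End Calculus.

Section Algebra.
Context {R : realFieldType}.

Lemma completed_square_lb {p : R} (q x : R) :
  0 < p -> - (q ^+ 2 / (4 * p)) <= p * x ^+ 2 + q * x.
Proof.
move=> p_gt0; rewrite -subr_ge0 opprK.
have -> : p * x ^+ 2 + q * x + q ^+ 2 / (4 * p) = (2 * p * x + q) ^+ 2 / (4 * p).
  by field; rewrite gt_eqF.
by rewrite divr_ge0 ?sqr_ge0 // ltW // mulr_gt0.
Qed.

Lemma quadratic_term_lb {n e s s1 : R} (w : R) : 1 <= n -> 0 < e ->
  0 <= s <= 1 -> -1 <= s1 <= 1 ->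
  - ((5 * n + 16) ^+ 2 / (2 * n * e)) <=
  n / 2 * e * s ^+ 4 * w ^+ 2
  + (12 * s ^+ 2 * s1 ^+ 2 - 8 * s ^+ 3 + 4 * (n - 1) * s ^+ 3 * s1 - n * s ^+ 4) * w.
Proof.
move=> n_ge1 e_gt0 /andP[s_ge0 s_le1] /andP[s1_ge s1_le].
set B := 12 * s1 ^+ 2 - 8 * s + 4 * (n - 1) * s * s1 - n * s ^+ 2.
have B_le : B ^+ 2 <= (5 * n + 16) ^+ 2.
  (* |B| <= 12 + 8 + 4 (n - 1) + n *)
  have s2 : 0 <= s ^+ 2 <= 1 by apply/andP; split; nra.
  have s12 : 0 <= s1 ^+ 2 <= 1 by apply/andP; split; nra.
  have ss1 : -1 <= s * s1 <= 1 by apply/andP; split; nra.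
  case/andP: s2 => ? ?; case/andP: s12 => ? ?; case/andP: ss1 => ? ?.
  have : B <= 5 * n + 16 by rewrite /B; nra.
  have : - (5 * n + 16) <= B by rewrite /B; nra.
  nra.
have ne_gt0 : 0 < n / 2 * e by rewrite mulr_gt0 ?divr_gt0 //; lra.
have := completed_square_lb B (s ^+ 2 * w) ne_gt0.
have -> : n / 2 * e * s ^+ 4 * w ^+ 2 + (12 * s ^+ 2 * s1 ^+ 2 - 8 * s ^+ 3
    + 4 * (n - 1) * s ^+ 3 * s1 - n * s ^+ 4) * w
  = n / 2 * e * (s ^+ 2 * w) ^+ 2 + B * (s ^+ 2 * w) by rewrite /B; ring.
apply: le_trans; rewrite lerN2 (_ : 4 * (n / 2 * e) = 2 * n * e); last by field.
by rewrite ler_pM2r // invr_gt0 mulr_gt0 // mulr_gt0 //; lra.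
Qed.
End Algebra.

Section ForcedEquation.
Context {R : realType}.

Definition lam_bound (n a b f0 : R) : R :=
  (5 * n + 16) ^+ 2 / (n * expR (- b) * f0 * ((b - a) ^+ 2 / 16) ^+ 4).

Context {n lam f0 a b : R} {F w w1 w2 : R -> R}.
Hypotheses (n_ge1 : 1 <= n) (lam_ge0 : 0 <= lam) (f0_gt0 : 0 < f0).
Hypotheses (ab : a < b) (ab_le1 : b - a <= 1).
Hypothesis w_derive :
  forall x, a <= x <= b -> is_derive x 1 w (w1 x) /\ is_derive x 1 w1 (w2 x).
(* Equation (star) with n = N - 1 and a general forcing term F. *)
Hypothesis w_eqn : forall x, a < x < b ->
  - w2 x + (n - 1) * w1 x + n * w x = n / 2 * expR (- x) * w x ^+ 2 + lam * F x.
Hypothesis F_ge : forall x, a < x < b -> f0 <= F x.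

Let s (t : R) := (t - a) * (b - t).
Let s1 (t : R) := a + b - 2 * t.
Let phi (t : R) := s t ^+ 4.
Let phi1 (t : R) := 4 * s t ^+ 3 * s1 t.
Let phi2 (t : R) := 12 * s t ^+ 2 * s1 t ^+ 2 - 8 * s t ^+ 3.
Let M := (5 * n + 16) ^+ 2 / (2 * n * expR (- b)).

Let energy (t : R) := phi1 t * w t - phi t * w1 t + (n - 1) * phi t * w t + M * t.
Let energy' (t : R) :=
  phi2 t * w t - phi t * w2 t + (n - 1) * phi1 t * w t + (n - 1) * phi t * w1 t + M.

Lemma is_derive_energy x : a <= x <= b -> is_derive x 1 energy (energy' x).
Proof.
move=> /w_derive[w_d w1_d].
have phi_d : is_derive x 1 phi (phi1 x).
  by apply: is_derive_eq; rewrite /GRing.scale /= /phi1 /s /s1; ring.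
have phi1_d : is_derive x 1 phi1 (phi2 x).
  by apply: is_derive_eq; rewrite /GRing.scale /= /phi2 /s /s1; ring.
by apply: is_derive_eq; rewrite /GRing.scale /= /energy'; ring.
Qed.

Lemma energy'_lb x : a < x < b -> lam * f0 * phi x <= energy' x.
Proof.
move=> x_ab; have /andP[ax xb] := x_ab.
have e_ge : expR (- b) <= expR (- x) by rewrite ler_expR; lra.
have s_01 : 0 <= s x <= 1.
  have [xa_ge0 bx_ge0] : 0 <= x - a /\ 0 <= b - x by split; lra.
  have [xa_le1 bx_le1] : x - a <= 1 /\ b - x <= 1 by move: ab_le1; split; lra.
  by apply/andP; split; [apply: mulr_ge0|rewrite -[1]mulr1 ler_pM].
have s1_11 : -1 <= s1 x <= 1 by move: ab_le1; rewrite /s1 => ?; apply/andP; split; lra.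
have n_gt0 : 0 < n by apply: lt_le_trans n_ge1.
have M_ge : (5 * n + 16) ^+ 2 / (2 * n * expR (- x)) <= M.
  rewrite /M ler_pM2l ?exprn_gt0 ?ltr_pwDr //; last by lra.
  by rewrite lef_pV2 ?posrE ?mulr_gt0 ?expR_gt0 // ler_pM2l ?mulr_gt0.
have quad := quadratic_term_lb (w x) n_ge1 (expR_gt0 (- x)) s_01 s1_11.
have F_phi : lam * f0 * phi x <= lam * F x * phi x.
  by rewrite ler_wpM2r ?exprn_ge0 ?ler_wpM2l ?F_ge //; case/andP: s_01.
have -> : energy' x = lam * F x * phi x + M + (n / 2 * expR (- x) * s x ^+ 4 * w x ^+ 2
   + (12 * s x ^+ 2 * s1 x ^+ 2 - 8 * s x ^+ 3 + 4 * (n - 1) * s x ^+ 3 * s1 x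
      - n * s x ^+ 4) * w x).
  have w2_x : w2 x = (n - 1) * w1 x + n * w x - n / 2 * expR (- x) * w x ^+ 2 - lam * F x.
    by move: (w_eqn _ x_ab); lra.
  by rewrite /energy' /phi /phi1 /phi2 /= w2_x; ring.
lra.
Qed.

Lemma forced_lam_bound : lam <= lam_bound n a b f0.
Proof.
set L := b - a; set sig := (L ^+ 2 / 16) ^+ 4.
have L_gt0 : 0 < L by rewrite subr_gt0.
have n_gt0 : 0 < n by apply: lt_le_trans n_ge1.
have sig_gt0 : 0 < sig by rewrite exprn_gt0 // divr_gt0 // exprn_gt0.
have phi_ge0 t : a < t < b -> 0 <= phi t.
  by case/andP=> ? ?; rewrite exprn_ge0 // mulr_ge0 // subr_ge0 ltW.
have energy'_ge0 t : a < t < b -> 0 <= energy' t.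
  move=> t_ab; apply: le_trans (energy'_lb _ t_ab).
  by rewrite mulr_ge0 ?phi_ge0 // mulr_ge0 // ltW.
have energy'_mid t : a + L / 4 < t < b - L / 4 -> lam * f0 * sig <= energy' t.
  move=> /andP[t_ge t_le].
  have t_ab : a < t < b by apply/andP; split; lra.
  apply: le_trans (energy'_lb _ t_ab); apply: ler_wpM2l; first by rewrite mulr_ge0 // ltW.
  have quarter_le : L / 4 * (L / 4) <= s t by rewrite ler_pM ?divr_ge0 ?ltW //; lra.
  rewrite /sig /phi (_ : L ^+ 2 / 16 = L / 4 * (L / 4)); last by rewrite expr2; field.
  have quarter_ge0 : 0 <= L / 4 * (L / 4) by rewrite mulr_ge0 // divr_ge0 // ltW.
  by apply: lerXn2r; rewrite // nnegrE // (le_trans quarter_ge0).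
have [aa' a'b' b'b] : [/\ a <= a + L / 4, a + L / 4 <= b - L / 4 & b - L / 4 <= b].
  by move: ab; rewrite /L; split; lra.
have := derive_lb_increment_sub aa' a'b' b'b is_derive_energy energy'_ge0 energy'_mid.
have -> : energy b - energy a = M * L.
  by rewrite /energy /phi /phi1 /s !subrr !(mul0r, mulr0) /L; ring.
rewrite (_ : b - L / 4 - (a + L / 4) = L / 2); last by rewrite /L; field.
move=> inc; have bound : lam * (f0 * sig) <= 2 * M.
  by rewrite -(ler_pM2r L_gt0); lra.
have -> : lam_bound n a b f0 = 2 * M / (f0 * sig).
  rewrite /lam_bound /M -/L -/sig; field.
  by rewrite !gt_eqF ?expR_gt0.
by rewrite ler_pdivlMr ?mulr_gt0.
Qed.
End ForcedEquation.

Section Restriction.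
Context {d : measure_display} {T : measurableType d} {R : realType}.
Context (mu : {measure set T -> \bar R}) {D : set T} (mD : measurable D).

Lemma ae_mrestrP (P : T -> Prop) :
  (\forall x \ae mrestr mu mD, P x) <-> {ae mu, forall x, D x -> P x}.
Proof.
split=> [[A [mA A0 notP_A]]|[A [mA A0 notP_A]]].
- exists (A `&` D); split; [exact: measurableI|exact: A0|].
  by move=> x /= /not_implyP[Dx notPx]; split; [apply: notP_A|].
- exists (A `|` ~` D); split; first by apply: measurableU => //; apply: measurableC.
  + rewrite /mrestr; apply/eqP; rewrite -measure_le0 -A0; apply: le_measure.
    * by rewrite inE; apply: measurableI => //; apply: measurableU => //; apply: measurableC.
    * by rewrite inE.
    * by move=> x [[Ax|notDx] Dx].
  + move=> x /= notPx; have [Dx|] := pselect (D x); last by right.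
    by left; apply: notP_A => /(_ Dx).
Qed.

Lemma ae_mrestr_cover (P : T -> Prop) (Z : set T) (A : nat -> set T) :
  mu.-negligible Z -> D `<=` Z `|` \bigcup_n A n ->
  (forall n, {ae mu, forall x, A n x -> P x}) -> \forall x \ae mrestr mu mD, P x.
Proof.
move=> Z0 D_cover P_A; apply/ae_mrestrP.
have : mu.-negligible (Z `|` \bigcup_n ~` [set x | A n x -> P x]).
  by apply: negligibleU => //; apply: negligible_bigcup.
apply: negligibleS => x /= /not_implyP[/D_cover[Zx|[n _ Anx]] notPx]; first by left.
by right; exists n => // /(_ Anx).
Qed.

End Restriction.

Section Primitive.
Context {R : realType}.
Local Notation mu := (@lebesgue_measure R).
Context {D : set (measurableTypeR R)} (mD : measurable D) {g : R -> R}.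
Hypothesis g_int : mu.-integrable D (EFin \o g).
Hypothesis g_ge0 : {ae mu, forall x, D x -> 0 <= g x}.

Lemma integral_abse_sub (E : set (measurableTypeR R)) : measurable E -> E `<=` D ->
  (\int[mu]_(x in E) (g x)%:E = \int[mu]_(x in E) `|(g x)%:E|)%E.
Proof.
move=> mE ED; have gE_int := integrableS mD mE ED g_int.
apply: ae_eq_integral => //.
- exact: measurable_int gE_int.
- exact: measurable_int (integrable_abse gE_int).
apply: filterS g_ge0 => x g_ge0_x Ex.
by rewrite /= ger0_norm // g_ge0_x //; apply: ED.
Qed.

Lemma Rintegral_ge0_sub (E : set (measurableTypeR R)) : measurable E -> E `<=` D ->
  0 <= Rintegral mu E g.
Proof.
by move=> mE ED; rewrite fine_ge0 // integral_abse_sub // integral_ge0.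
Qed.

Lemma Rintegral_le0_ae_eq0 (E : set (measurableTypeR R)) : measurable E -> E `<=` D ->
  Rintegral mu E g <= 0 -> ae_eq mu E (EFin \o g) (cst 0%E).
Proof.
move=> mE ED E_le0; have /integrableP[g_mE g_fin] := integrableS mD mE ED g_int.
apply/(ae_eq_integral_abs _ mE g_mE).
apply/eqP; rewrite eq_le integral_ge0 // andbT leNgt; apply/negP => abs_gt0.
have : 0 < Rintegral mu E g by rewrite fine_gt0 // integral_abse_sub // abs_gt0.
by rewrite ltNge E_le0.
Qed.

Lemma Gint_le (x y : R) : `[0, y] `<=` D -> 0 <= x -> x <= y -> Gint g x <= Gint g y.
Proof.
move=> yD x_ge0 xy.
have split_y : `[0, y]%classic = `[0, x]%classic `|` `]x, y]%classic.
  by apply: itv_bndbnd_setU; rewrite bnd_simp.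
rewrite /Gint split_y Rintegral_setU //; last 2 first.
- by rewrite -split_y; apply: integrableS g_int.
- apply/disj_setPS => z [] /=; rewrite !in_itv /= => /andP[_ zx] /andP[xz _].
  by move: (lt_le_trans xz zx); rewrite ltxx.
rewrite lerDl Rintegral_ge0_sub //.
by apply: subset_trans yD; apply: subset_itv; rewrite bnd_simp.
Qed.

Lemma Gint_gt0_cover (Z : set (measurableTypeR R)) (X : nat -> R) :
  mu.-negligible Z -> D `<=` Z `|` \bigcup_n `[0, X n]%classic ->
  (forall n, `[0, X n] `<=` D) ->
  (0 < ess_sup (mrestr mu mD) (EFin \o g))%E -> exists n, 0 < Gint g (X n).
Proof.
move=> Z0 D_cover XD ess_gt0; apply: contrapT => Gint_le0.
suff : (ess_sup (mrestr mu mD) (EFin \o g) <= 0)%E by rewrite leNgt ess_gt0.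
apply/ess_supP; apply: (ae_mrestr_cover _ mD _ _ _ Z0 D_cover) => n.
have /Rintegral_le0_ae_eq0 : Gint g (X n) <= 0.
  by rewrite leNgt; apply/negP => G_gt0; apply: Gint_le0; exists n.
by move=> /(_ (measurable_itv _) (XD n)); apply: filterS => x g0 /g0 /= ->.
Qed.

End Primitive.

Section Forcing.
Context {R : realType}.
Local Notation mu := (@lebesgue_measure R).

Lemma min_expR_le (c a b t : R) : a <= t <= b ->
  Num.min (expR (c * a)) (expR (c * b)) <= expR (c * t).
Proof.
case/andP=> a_t tb; rewrite ge_min !ler_expR; have [c_ge0|c_lt0] := leP 0 c.
  by rewrite (ler_wpM2l c_ge0 a_t).
by rewrite (ler_wnM2l (ltW c_lt0) tb) orbT.
Qed.

Lemma forcing_lb_itv (N : nat) {D : set (measurableTypeR R)} (mD : measurable D)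
    {g : R -> R} {X a b : R} :
  mu.-integrable D (EFin \o g) -> {ae mu, forall x, D x -> 0 <= g x} ->
  0 < Gint g X -> `[0, expR (- a)] `<=` D -> expR (- b) = X ->
  exists2 f0 : R, 0 < f0 & forall t, a <= t <= b -> f0 <= forcing N g t.
Proof.
move=> g_int g_ge0 GX_gt0 aD bX.
exists (Num.min (expR ((N%:R - 3) * a)) (expR ((N%:R - 3) * b)) * Gint g X).
  by rewrite mulr_gt0 // lt_min !expR_gt0.
move=> t t_ab; have /andP[a_t tb] := t_ab.
have X_ge0 : 0 <= X by rewrite -bX expR_ge0.
apply: ler_pM; rewrite ?le_min ?expR_ge0 ?(ltW GX_gt0) ?min_expR_le //.
apply: (Gint_le mD g_int g_ge0) => //; last by rewrite -bX ler_expR lerN2.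
by apply: subset_trans aD; apply: subset_itv; rewrite bnd_simp ?ler_expR ?lerN2.
Qed.

End Forcing.

Section DataPositivity.
Context {R : realType}.
Local Notation mu := (@lebesgue_measure R).

Lemma hyp_g01_Gint_gt0 {N : nat} {g : R -> R} :
  hyp_g01 N g -> exists2 X : R, 0 < X < 1 & 0 < Gint g X.
Proof.
case=> g_int [_ [/ae_mrestrP g_ge0 ess_gt0]].
pose X (n : nat) : R := 1 - n.+2%:R^-1.
have X_01 n : 0 < X n < 1.
  by rewrite subr_gt0 invf_lt1 ?ltr1n // ltrBlDr ltrDl invr_gt0 ltr0n.
have XD n : `[0, X n] `<=` `[0, 1].
  by case/andP: (X_01 n) => _ /ltW X1; apply: subset_itv; rewrite bnd_simp.
have cover : `[0, 1] `<=` [set 1] `|` \bigcup_n `[0, X n]%classic.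
  move=> x /=; rewrite in_itv /= => /andP[x_ge0 x_le1].
  have [->|x_ne1] := eqVneq x 1; first by left.
  have [k xk] : exists k, x + k.+1%:R^-1 < 1.
    by apply: ltr_add_invr; rewrite lt_neqAle x_ne1.
  right; exists k => //=; rewrite in_itv /= x_ge0 /= /X lerBrDr.
  by apply: le_trans (ltW xk); rewrite lerD2l lef_pV2 ?posrE ?ltr0n // ler_nat ltnW.
have set1_0 : mu.-negligible [set (1 : R)].
  by exists [set 1]; split; [exact: measurable_set1|exact: lebesgue_measure_set1|].
have [n GX] := Gint_gt0_cover _ g_int g_ge0 _ _ set1_0 cover XD ess_gt0.
by exists (X n).
Qed.

Lemma hyp_gPos_Gint_gt0 {N : nat} {g : R -> R} :
  hyp_gPos N g -> exists2 X : R, 0 < X & 0 < Gint g X.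
Proof.
case=> g_int [_ [_ [/ae_mrestrP g_ge0 ess_gt0]]].
have XD n : `[0, n.+1%:R : R] `<=` `[0, +oo[ by apply: subset_itv; rewrite bnd_simp.
have cover : `[0, +oo[ `<=` set0 `|` \bigcup_n `[0, n.+1%:R : R]%classic.
  move=> x /=; rewrite in_itv /= andbT => x_ge0; right.
  by exists (Num.truncn x) => //=; rewrite in_itv /= x_ge0 ltW // truncnS_gt.
have [n GX] := Gint_gt0_cover _ g_int g_ge0 _ _ (negligible_set0 _) cover XD ess_gt0.
by exists n.+1%:R.
Qed.

End DataPositivity.

Section Nonexistence.
Context {R : realType}.

Lemma eqn_unsolvable_on {N : nat} {g : R -> R} {a b f0 : R} : (2 <= N)%N ->
  a < b -> b - a <= 1 -> 0 < f0 -> (forall t, a <= t <= b -> f0 <= forcing N g t) ->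
  exists2 lam0 : R, 0 < lam0 & forall lam, lam0 < lam -> forall w w1 w2 : R -> R,
    (forall x, a <= x <= b -> is_derive x 1 w (w1 x) /\ is_derive x 1 w1 (w2 x)) ->
    ~ (forall x, a < x < b -> Defs.eqn N lam g w w1 w2 x).
Proof.
move=> N_ge2 ab ab_le1 f0_gt0 forcing_ge.
exists (Num.max 1 (lam_bound (N%:R - 1) a b f0)); first by rewrite lt_max ltr01.
move=> lam; rewrite gt_max => /andP[lam_gt1 lam_gt] w w1 w2 w_derive w_eqn.
have n_ge1 : 1 <= N%:R - 1 :> R by rewrite lerBrDr (_ : 1 + 1 = 2%:R) // ler_nat.
suff : lam <= lam_bound (N%:R - 1) a b f0 by rewrite leNgt lam_gt.
have lam_ge0 : 0 <= lam by rewrite ltW // (lt_trans ltr01).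
apply: (forced_lam_bound (F := forcing N g) n_ge1 lam_ge0 f0_gt0 ab ab_le1 w_derive).
  by move=> x /w_eqn; rewrite /Defs.eqn (_ : N%:R - 2 = N%:R - 1 - 1) //; ring.
by move=> x /andP[? ?]; apply: forcing_ge; rewrite !ltW.
Qed.

Lemma eqn_unsolvable_halfline {N : nat} {g : R -> R} : (2 <= N)%N -> hyp_g01 N g ->
  exists2 lam0 : R, 0 < lam0 & forall lam, lam0 < lam -> forall w w1 w2 : R -> R,
    C2_halfline w w1 w2 -> ~ (forall t, 0 <= t -> Defs.eqn N lam g w w1 w2 t).
Proof.
move=> N_ge2 hg; have [X /andP[X_gt0 X_lt1] GX_gt0] := hyp_g01_Gint_gt0 hg.
case: hg => g_int [_ [/ae_mrestrP g_ge0 _]].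
set b := - ln X; set a := b - Num.min 1 (b / 2).
have b_gt0 : 0 < b by rewrite oppr_gt0 ln_lt0 // X_gt0.
have [L_gt0 L_le1 L_le] : [/\ 0 < Num.min 1 (b / 2), Num.min 1 (b / 2) <= 1
  & Num.min 1 (b / 2) <= b / 2].
  by split; rewrite ?lt_min ?ltr01 ?divr_gt0 // ge_min lexx ?orbT.
have [a_gt0 ab ab_le1] : [/\ 0 < a, a < b & b - a <= 1] by rewrite /a; split; lra.
have aD : `[0, expR (- a)] `<=` `[0, 1].
  by apply: subset_itv; rewrite bnd_simp // expR_le1 oppr_le0 ltW.
have bX : expR (- b) = X by rewrite opprK lnK.
have [f0 f0_gt0 forcing_ge] := forcing_lb_itv N (measurable_itv _) g_int g_ge0 GX_gt0 aD bX.
have [lam0 lam0_gt0 unsolvable] := eqn_unsolvable_on N_ge2 ab ab_le1 f0_gt0 forcing_ge.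
exists lam0 => // lam lam_gt w w1 w2 [w_derive _] w_eqn.
apply: (unsolvable lam lam_gt w w1 w2).
  by move=> x /andP[ax xb]; apply: w_derive; lra.
by move=> x /andP[ax xb]; apply: w_eqn; lra.
Qed.

Lemma eqn_unsolvable_line {N : nat} {g : R -> R} : (2 <= N)%N -> hyp_gPos N g ->
  exists2 lam0 : R, 0 < lam0 & forall lam, lam0 < lam -> forall w : R -> R,
    ~ solE N lam g w.
Proof.
move=> N_ge2 hg; have [X X_gt0 GX_gt0] := hyp_gPos_Gint_gt0 hg.
case: hg => g_int [_ [_ [/ae_mrestrP g_ge0 _]]].
set b := - ln X; set a := b - 1.
have [ab ab_le1] : a < b /\ b - a <= 1 by rewrite /a; split; lra.
have aD : `[0, expR (- a)] `<=` `[0, +oo[ by apply: subset_itv; rewrite bnd_simp.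
have bX : expR (- b) = X by rewrite opprK lnK.
have [f0 f0_gt0 forcing_ge] := forcing_lb_itv N (measurable_itv _) g_int g_ge0 GX_gt0 aD bX.
have [lam0 lam0_gt0 unsolvable] := eqn_unsolvable_on N_ge2 ab ab_le1 f0_gt0 forcing_ge.
exists lam0 => // lam lam_gt w [w1 [w2 [[w_derive _] [w_eqn _]]]].
by apply: (unsolvable lam lam_gt w w1 w2) => x _; [apply: w_derive|apply: w_eqn].
Qed.

End Nonexistence.

Theorem theorem4p14 (R : realType) (N : nat) (hN : (2 <= N)%N) :
  (forall g : R -> R, hyp_g01 N g ->
     exists2 lam0 : R, 0 < lam0 &
       forall lam : R, lam0 < lam -> forall w : R -> R, ~ solD N lam g w) /\
  (forall g : R -> R, hyp_g01 N g ->
     exists2 lam0 : R, 0 < lam0 &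
       forall lam : R, lam0 < lam -> forall w : R -> R, ~ solNav N lam g w) /\
  (forall g : R -> R, hyp_gPos N g ->
     exists2 lam0 : R, 0 < lam0 &
       forall lam : R, lam0 < lam -> forall w : R -> R, ~ solE N lam g w).
Proof.
split; [|split]; last by move=> g; exact: eqn_unsolvable_line hN.
all: move=> g /(eqn_unsolvable_halfline hN)[lam0 lam0_gt0 unsolvable].
all: exists lam0 => // lam lam_gt w [w1 [w2 [w_C2 [w_eqn _]]]].
all: exact: unsolvable lam_gt w w1 w2 w_C2 w_eqn.
Qed.
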